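(* Let $\Lambda<\Gamma$, let $\mathcal R$ be a set of representatives of the cosets $\Lambda\gamma$ with $e\in\mathcal R$, and let $\mathcal H$ be a Hilbert space. For maps $\mu,\mu_1,\mu_2:\Lambda\to U(\mathcal H)$ with induced maps $\overline\mu,\overline\mu_1,\overline\mu_2:\Gamma\to U(\ell^2(\mathcal R,\mathcal H))$ one has: (1) $\mathrm{def}(\overline\mu)=\mathrm{def}(\mu)$; (2) $\|\overline\mu_1-\overline\mu_2\|=\|\mu_1-\mu_2\|$; (3) $D(\overline\mu)\le D(\mu)$.
   Context: Let $r:\Gamma\to\mathcal R$ be the retraction $r(\gamma)=$ the unique element of $\Lambda\gamma\cap\mathcal R$. For $\mu:\Lambda\to U(\mathcal H)$ the induced map $\overline\mu:\Gamma\to U(\ell^2(\mathcal R,\mathcal H))$ is $(\overline\mu(\gamma)f)(x)=\mu(x\gamma\, r(x\gamma)^{-1})\,f(r(x\gamma))$ for $f\in\ell^2(\mathcal R,\mathcal H)$, $x\in\mathcal R$. For maps into $U(\mathcal L)$: $\|\mu-\nu\|=\sup_\gamma\|\mu(\gamma)-\nu(\gamma)\|$ (operator norm), $D(\mu)=\inf\{\|\mu-\nu\|:\nu$ a unitary representation on the same space$\}$, $\mathrm{def}(\mu)=\sup_{x,y}\|\mu(xy)-\mu(x)\mu(y)\|$. *)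

From Stdlib Require Import Reals List ClassicalEpsilon.
Open Scope R_scope.

Record C := mkC { Cre : R; Cim : R }.
Definition C0 : C := mkC 0 0.
Definition C1 : C := mkC 1 0.
Definition Cadd (a b : C) : C := mkC (Cre a + Cre b) (Cim a + Cim b).
Definition Cmul (a b : C) : C :=
  mkC (Cre a * Cre b - Cim a * Cim b) (Cre a * Cim b + Cim a * Cre b).
Definition Cconj (a : C) : C := mkC (Cre a) (- Cim a).

Record Hilbert := {
  hcar :> Type;
  hzero : hcar;
  hadd : hcar -> hcar -> hcar;
  hopp : hcar -> hcar;
  hscal : C -> hcar -> hcar;
  hinner : hcar -> hcar -> C;
  hadd_assoc : forall x y z, hadd x (hadd y z) = hadd (hadd x y) z;
  hadd_comm : forall x y, hadd x y = hadd y x;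
  hadd_0 : forall x, hadd x hzero = x;
  hadd_opp : forall x, hadd x (hopp x) = hzero;
  hscal_assoc : forall a b x, hscal a (hscal b x) = hscal (Cmul a b) x;
  hscal_1 : forall x, hscal C1 x = x;
  hscal_distr_v : forall a x y, hscal a (hadd x y) = hadd (hscal a x) (hscal a y);
  hscal_distr_s : forall a b x, hscal (Cadd a b) x = hadd (hscal a x) (hscal b x);
  hinner_conj : forall x y, hinner y x = Cconj (hinner x y);
  hinner_add_l : forall x y z, hinner (hadd x y) z = Cadd (hinner x z) (hinner y z);
  hinner_scal_l : forall a x y, hinner (hscal a x) y = Cmul a (hinner x y);
  hinner_pos : forall x, 0 <= Cre (hinner x x);
  hinner_def : forall x, hinner x x = C0 -> x = hzero;
  hcomplete : forall u : nat -> hcar,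
    (forall eps, 0 < eps -> exists N, forall m n, (N <= m)%nat -> (N <= n)%nat ->
        sqrt (Cre (hinner (hadd (u m) (hopp (u n))) (hadd (u m) (hopp (u n))))) < eps) ->
    exists l, forall eps, 0 < eps -> exists N, forall n, (N <= n)%nat ->
        sqrt (Cre (hinner (hadd (u n) (hopp l)) (hadd (u n) (hopp l)))) < eps
}.

Arguments hzero {h}. Arguments hadd {h}. Arguments hopp {h}.
Arguments hscal {h}. Arguments hinner {h}.

Definition hsub {H : Hilbert} (x y : H) : H := hadd x (hopp y).
Definition hnorm {H : Hilbert} (x : H) : R := sqrt (Cre (hinner x x)).

(* least upper bound when it exists (always the case below) *)
Definition Rsup (P : R -> Prop) : R := epsilon (inhabits 0) (fun l => is_lub P l).
Definition Rinf (P : R -> Prop) : R := - Rsup (fun x => P (- x)).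

Record Group := {
  gcar :> Type;
  gmul : gcar -> gcar -> gcar;
  ginv : gcar -> gcar;
  ge : gcar;
  gmul_assoc : forall x y z, gmul x (gmul y z) = gmul (gmul x y) z;
  gmul_e_l : forall x, gmul ge x = x;
  gmul_e_r : forall x, gmul x ge = x;
  gmul_inv_l : forall x, gmul (ginv x) x = ge;
  gmul_inv_r : forall x, gmul x (ginv x) = ge
}.
Arguments gmul {g}. Arguments ginv {g}. Arguments ge {g}.

Definition is_subgroup (G : Group) (Lam : G -> Prop) : Prop :=
  Lam ge /\ (forall x y, Lam x -> Lam y -> Lam (gmul x y)) /\
  (forall x, Lam x -> Lam (ginv x)).

(* Rep is a set of representatives of the right cosets Lam*g:
   each coset Lam*g (= {x | x g^-1 in Lam}) meets Rep in exactly one point *)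
Definition is_transversal (G : Group) (Lam Rep : G -> Prop) : Prop :=
  forall g : G, exists! x, Rep x /\ Lam (gmul x (ginv g)).

Definition RepT {G : Group} (Rep : G -> Prop) : Type := {x : G | Rep x}.

Definition retr {G : Group} (Lam Rep : G -> Prop) (heR : Rep ge) (g : G) : RepT Rep :=
  epsilon (inhabits (exist _ ge heR))
    (fun x : RepT Rep => Lam (gmul (proj1_sig x) (ginv g))).

Definition sqsum {G : Group} {Rep : G -> Prop} {H : Hilbert}
  (f : RepT Rep -> H) (l : list (RepT Rep)) : R :=
  fold_right (fun x acc => hnorm (f x) ^ 2 + acc) 0 l.

Definition finsums {G : Group} {Rep : G -> Prop} {H : Hilbert}
  (f : RepT Rep -> H) : R -> Prop :=
  fun s => exists l : list (RepT Rep),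
    NoDup (map (@proj1_sig _ _) l) /\ s = sqsum f l.

Definition is_l2 {G : Group} {Rep : G -> Prop} {H : Hilbert}
  (f : RepT Rep -> H) : Prop := exists B, forall s, finsums f s -> s <= B.

Definition l2norm {G : Group} {Rep : G -> Prop} {H : Hilbert}
  (f : RepT Rep -> H) : R := sqrt (Rsup (finsums f)).

Definition L2op {G : Group} (Rep : G -> Prop) (H : Hilbert) : Type :=
  (RepT Rep -> H) -> (RepT Rep -> H).

Definition is_unitary {H : Hilbert} (U : H -> H) : Prop :=
  (forall a v w, U (hadd (hscal a v) w) = hadd (hscal a (U v)) (U w)) /\
  (forall v, hnorm (U v) = hnorm v) /\
  (forall w, exists v, U v = w).

Definition is_unitary_l2 {G : Group} {Rep : G -> Prop} {H : Hilbert}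
  (U : L2op Rep H) : Prop :=
  (forall f, is_l2 f -> is_l2 (U f)) /\
  (forall a f g, is_l2 f -> is_l2 g -> forall x,
      U (fun y => hadd (hscal a (f y)) (g y)) x = hadd (hscal a (U f x)) (U g x)) /\
  (forall f, is_l2 f -> l2norm (U f) = l2norm f) /\
  (forall g, is_l2 g -> exists f, is_l2 f /\ forall x, U f x = g x).

Definition opdist {H : Hilbert} (A B : H -> H) : R :=
  Rsup (fun s => exists v : H, hnorm v <= 1 /\ s = hnorm (hsub (A v) (B v))).

Definition opdist_l2 {G : Group} {Rep : G -> Prop} {H : Hilbert}
  (A B : L2op Rep H) : R :=
  Rsup (fun s => exists f, is_l2 f /\ l2norm f <= 1 /\
          s = l2norm (fun x => hsub (A f x) (B f x))).

(* ---------- maps Lam -> U(H) (given as functions on G, only values on Lam matter) *)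
Definition maps_to_U {G : Group} (Lam : G -> Prop) {H : Hilbert} (mu : G -> H -> H) : Prop :=
  forall l, Lam l -> is_unitary (mu l).

Definition is_unitary_rep_sub {G : Group} (Lam : G -> Prop) {H : Hilbert}
  (nu : G -> H -> H) : Prop :=
  maps_to_U Lam nu /\
  (forall x y, Lam x -> Lam y -> forall v, nu (gmul x y) v = nu x (nu y v)).

Definition is_unitary_rep_l2 {G : Group} {Rep : G -> Prop} {H : Hilbert}
  (nu : G -> L2op Rep H) : Prop :=
  (forall g, is_unitary_l2 (nu g)) /\
  (forall x y f, is_l2 f -> forall z, nu (gmul x y) f z = nu x (nu y f) z).

Definition dist_sub {G : Group} (Lam : G -> Prop) {H : Hilbert} (mu nu : G -> H -> H) : R :=
  Rsup (fun s => exists l, Lam l /\ s = opdist (mu l) (nu l)).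

Definition def_sub {G : Group} (Lam : G -> Prop) {H : Hilbert} (mu : G -> H -> H) : R :=
  Rsup (fun s => exists x y, Lam x /\ Lam y /\
          s = opdist (mu (gmul x y)) (fun v => mu x (mu y v))).

Definition D_sub {G : Group} (Lam : G -> Prop) {H : Hilbert} (mu : G -> H -> H) : R :=
  Rinf (fun d => exists nu, is_unitary_rep_sub Lam nu /\ d = dist_sub Lam mu nu).

Definition dist_l2 {G : Group} {Rep : G -> Prop} {H : Hilbert} (mu nu : G -> L2op Rep H) : R :=
  Rsup (fun s => exists g, s = opdist_l2 (mu g) (nu g)).

Definition def_l2 {G : Group} {Rep : G -> Prop} {H : Hilbert} (mu : G -> L2op Rep H) : R :=
  Rsup (fun s => exists x y, s = opdist_l2 (mu (gmul x y)) (fun f => mu x (mu y f))).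

Definition D_l2 {G : Group} {Rep : G -> Prop} {H : Hilbert} (mu : G -> L2op Rep H) : R :=
  Rinf (fun d => exists nu, is_unitary_rep_l2 nu /\ d = dist_l2 mu nu).

(* (indu mu g f)(x) = mu(x g r(x g)^-1) (f (r (x g))) *)
Definition induce {G : Group} (Lam Rep : G -> Prop) (heR : Rep ge) {H : Hilbert}
  (mu : G -> H -> H) (g : G) : L2op Rep H :=
  fun f x =>
    let xg := gmul (proj1_sig x) g in
    let rx := retr Lam Rep heR xg in
    mu (gmul xg (ginv (proj1_sig rx))) (f rx).

(* The induced operator [induce mu g] is a weighted shift on l^2(R, H): it moves coordinates
   along the action [ract g] of g on the cosets and twists coordinate z by the unitary
   mu (c z g), where c z g = z g r(z g)^-1 lies in Lambda and satisfies the cocycle identity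
   c z (x y) = c z x * c (ract x z) y.  For two weighted shifts along the same injective map,
   the operator distance is the supremum of the distances of the weights (tested on vectors
   supported at a single point for the lower bound).  Since c e l = l for l in Lambda, every
   value (resp. defect) of mu occurs as a weight at the coset of e, and by the cocycle identity
   every weight is such a value (resp. defect); this gives (1) and (2).  Induction sends unitary
   representations of Lambda to unitary representations of Gamma, so by (2) every distance from
   mu to a representation is also a distance from the induced map to one, which gives (3). *)

From Stdlib Require Import Reals Lra List ClassicalEpsilon ProofIrrelevance
  FunctionalExtensionality FinFun.
Open Scope R_scope.

Section HilbertFacts.
Variable H : Hilbert.
Implicit Types x y z v : H.

Lemma hadd_idem_zero y : hadd y y = y -> y = hzero.
Proof.
  intro E. transitivity (hadd (hadd y y) (hopp y)).
  - rewrite <- hadd_assoc, hadd_opp, hadd_0. reflexivity.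
  - rewrite E. apply hadd_opp.
Qed.

Lemma hopp_unique x y : hadd x y = hzero -> y = hopp x.
Proof.
  intro E. rewrite <- (hadd_0 H (hopp x)), <- E, hadd_assoc, (hadd_comm H (hopp x) x),
    hadd_opp, hadd_comm, hadd_0.
  reflexivity.
Qed.

Lemma hscal_zero c : hscal c (@hzero H) = hzero.
Proof. apply hadd_idem_zero. rewrite <- hscal_distr_v, hadd_0. reflexivity. Qed.

Lemma hscal_sub c x y : hscal c (hsub x y) = hsub (hscal c x) (hscal c y).
Proof.
  unfold hsub. rewrite hscal_distr_v. f_equal.
  apply hopp_unique. rewrite <- hscal_distr_v, hadd_opp, hscal_zero. reflexivity.
Qed.

Definition re_inner x y : R := Cre (hinner x y).

Lemma re_inner_sym x y : re_inner x y = re_inner y x.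
Proof. unfold re_inner. rewrite hinner_conj. reflexivity. Qed.

Lemma re_inner_add_l x y z : re_inner (hadd x y) z = re_inner x z + re_inner y z.
Proof. unfold re_inner. rewrite hinner_add_l. reflexivity. Qed.

Lemma re_inner_add_r x y z : re_inner x (hadd y z) = re_inner x y + re_inner x z.
Proof. rewrite re_inner_sym, re_inner_add_l, !(re_inner_sym x). reflexivity. Qed.

Lemma re_inner_opp_l x y : re_inner (hopp x) y = - re_inner x y.
Proof.
  assert (Z : re_inner hzero y = 0).
  { assert (E := re_inner_add_l hzero hzero y). rewrite hadd_0 in E. lra. }
  rewrite <- (hadd_opp H x), re_inner_add_l in Z. lra.
Qed.

Lemma re_inner_opp_r x y : re_inner x (hopp y) = - re_inner x y.
Proof. rewrite re_inner_sym, re_inner_opp_l, re_inner_sym. reflexivity. Qed.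

Lemma re_inner_scal_l t x y : re_inner (hscal (mkC t 0) x) y = t * re_inner x y.
Proof. unfold re_inner. rewrite hinner_scal_l. simpl. ring. Qed.

Lemma re_inner_scal_r t x y : re_inner x (hscal (mkC t 0) y) = t * re_inner x y.
Proof. rewrite re_inner_sym, re_inner_scal_l, re_inner_sym. reflexivity. Qed.

Lemma hnorm_nonneg x : 0 <= hnorm x.
Proof. apply sqrt_pos. Qed.

Lemma hnorm_sq x : hnorm x ^ 2 = re_inner x x.
Proof. apply pow2_sqrt, hinner_pos. Qed.

Lemma hnorm_scal t x : 0 <= t -> hnorm (hscal (mkC t 0) x) = t * hnorm x.
Proof.
  intro Ht. unfold hnorm. fold (re_inner (hscal (mkC t 0) x) (hscal (mkC t 0) x)).
  fold (re_inner x x). rewrite re_inner_scal_l, re_inner_scal_r, <- Rmult_assoc.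
  rewrite sqrt_mult by (nra || apply hinner_pos). rewrite sqrt_square by exact Ht. reflexivity.
Qed.

Lemma hnorm_zero : hnorm (@hzero H) = 0.
Proof. rewrite <- (hscal_zero (mkC 0 0)), hnorm_scal by lra. ring. Qed.

Lemma hnorm_sub_sq x y : hnorm (hsub x y) ^ 2 <= 2 * hnorm x ^ 2 + 2 * hnorm y ^ 2.
Proof.
  rewrite !hnorm_sq. unfold hsub.
  assert (Hp := hinner_pos H (hadd x y)). fold (re_inner (hadd x y) (hadd x y)) in Hp.
  rewrite !re_inner_add_l, !re_inner_add_r in *. rewrite !re_inner_opp_l, !re_inner_opp_r.
  rewrite (re_inner_sym y x) in *. lra.
Qed.

Definition is_isometry (U : H -> H) : Prop :=
  (forall a v w, U (hadd (hscal a v) w) = hadd (hscal a (U v)) (U w)) /\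
  (forall v, hnorm (U v) = hnorm v).

Lemma unitary_isometry U : is_unitary U -> is_isometry U.
Proof. intros [L [N _]]. split; assumption. Qed.

Lemma isometry_comp U V : is_isometry U -> is_isometry V -> is_isometry (fun v => U (V v)).
Proof.
  intros [LU NU] [LV NV]. split; intros.
  - rewrite LV, LU. reflexivity.
  - rewrite NU, NV. reflexivity.
Qed.

Lemma isometry_scal U c v : is_isometry U -> U (hscal c v) = hscal c (U v).
Proof.
  intros [L _].
  assert (Z : U hzero = hzero).
  { apply hadd_idem_zero. rewrite <- (hscal_1 H (U hzero)) at 1.
    rewrite <- L, hscal_1, hadd_0. reflexivity. }
  rewrite <- (hadd_0 H (hscal c v)), L, Z, hadd_0. reflexivity.
Qed.

Lemma hnorm_sub_isometry A B v : is_isometry A -> is_isometry B ->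
  hnorm (hsub (A v) (B v)) <= 2 * hnorm v.
Proof.
  intros [_ NA] [_ NB]. pose proof (hnorm_sub_sq (A v) (B v)) as E. rewrite NA, NB in E.
  pose proof (hnorm_nonneg v). pose proof (hnorm_nonneg (hsub (A v) (B v))). nra.
Qed.

End HilbertFacts.

Lemma Rsup_is_lub (Q : R -> Prop) :
  (exists x, Q x) -> (exists B, forall x, Q x -> x <= B) -> is_lub Q (Rsup Q).
Proof.
  intros Ne [B HB]. unfold Rsup. apply epsilon_spec.
  destruct (completeness Q) as [m Hm]; [exists B; exact HB | exact Ne | exists m; exact Hm].
Qed.

Lemma Rsup_upper (Q : R -> Prop) x : (exists B, forall y, Q y -> y <= B) -> Q x -> x <= Rsup Q.
Proof. intros Hb Hx. apply (Rsup_is_lub Q (ex_intro _ x Hx) Hb). exact Hx. Qed.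

Lemma Rsup_least (Q : R -> Prop) B : (exists x, Q x) -> (forall x, Q x -> x <= B) -> Rsup Q <= B.
Proof. intros Ne Hb. apply (Rsup_is_lub Q Ne (ex_intro _ B Hb)). exact Hb. Qed.

Lemma Rsup_eq_of_dominated (S T : R -> Prop) :
  (exists s, S s) -> (exists B, forall s, S s -> s <= B) -> (exists t, T t) ->
  (forall t, T t -> t <= Rsup S) -> (forall s, S s -> exists t, T t /\ s <= t) ->
  Rsup T = Rsup S.
Proof.
  intros NeS BS NeT TS ST. apply Rle_antisym.
  - apply Rsup_least; assumption.
  - apply Rsup_least; [exact NeS|]. intros s Ss. destruct (ST s Ss) as [t [Tt Hst]].
    eapply Rle_trans; [exact Hst|]. apply Rsup_upper; [exists (Rsup S)|]; assumption.
Qed.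

Lemma Rinf_le_of_subset (S T : R -> Prop) :
  (exists s, S s) -> (exists B, forall t, T t -> B <= t) -> (forall s, S s -> T s) ->
  Rinf T <= Rinf S.
Proof.
  intros [s Ss] [B HB] ST. unfold Rinf. apply Ropp_le_contravar, Rsup_least.
  - exists (- s). rewrite Ropp_involutive. exact Ss.
  - intros x Sx. apply Rsup_upper; [|apply ST, Sx].
    exists (- B). intros y Ty. specialize (HB _ Ty). lra.
Qed.

Section OperatorDistance.
Variable H : Hilbert.
Variables A B : H -> H.

Lemma opdist_least D :
  (forall v, hnorm v <= 1 -> hnorm (hsub (A v) (B v)) <= D) -> opdist A B <= D.
Proof.
  intro HD. apply Rsup_least; [|intros s [v [Hv ->]]; auto].
  exists (hnorm (hsub (A hzero) (B hzero))), hzero. rewrite hnorm_zero. split; [lra | reflexivity].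
Qed.

Hypotheses (IA : is_isometry H A) (IB : is_isometry H B).

Lemma opdist_upper v : hnorm v <= 1 -> hnorm (hsub (A v) (B v)) <= opdist A B.
Proof.
  intro Hv. apply Rsup_upper; [|exists v; auto].
  exists 2. intros s [w [Hw ->]]. pose proof (hnorm_sub_isometry H A B w IA IB). lra.
Qed.

Lemma opdist_nonneg : 0 <= opdist A B.
Proof.
  eapply Rle_trans; [apply hnorm_nonneg | apply (opdist_upper hzero)].
  rewrite hnorm_zero. lra.
Qed.

Lemma opdist_le_2 : opdist A B <= 2.
Proof.
  apply opdist_least. intros v Hv. pose proof (hnorm_sub_isometry H A B v IA IB). lra.
Qed.

(* Rescale [v] to the unit sphere; the case [hnorm v = 0] is covered by [hnorm_sub_isometry]. *)
Lemma hnorm_sub_le_opdist v : hnorm (hsub (A v) (B v)) <= opdist A B * hnorm v.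
Proof.
  pose proof (hnorm_nonneg H v) as Nv. pose proof opdist_nonneg.
  destruct (Req_dec (hnorm v) 0) as [Z|NZ].
  - pose proof (hnorm_sub_isometry H A B v IA IB). pose proof (hnorm_nonneg H (hsub (A v) (B v))).
    rewrite Z in *. lra.
  - set (t := / hnorm v).
    assert (Ht : 0 < t) by (apply Rinv_0_lt_compat; lra).
    assert (E := opdist_upper (hscal (mkC t 0) v)).
    rewrite (isometry_scal H A), (isometry_scal H B), <- hscal_sub, !hnorm_scal in E by
      (auto; lra).
    unfold t in E. rewrite Rinv_l in E by exact NZ.
    assert (E' := E (Rle_refl 1)).
    apply (Rmult_le_compat_r (hnorm v)) in E'; [|lra].
    rewrite Rmult_comm, <- Rmult_assoc, Rinv_r, Rmult_1_l in E' by exact NZ. exact E'.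
Qed.

End OperatorDistance.

Section SquareSummable.
Variable G : Group.
Variable Rep : G -> Prop.
Variable H : Hilbert.
Implicit Types f g : RepT Rep -> H.

Lemma RepT_eq (a b : RepT Rep) : proj1_sig a = proj1_sig b -> a = b.
Proof.
  destruct a as [a pa], b as [b pb]; simpl; intro E; subst. f_equal. apply proof_irrelevance.
Qed.

Lemma finsums_nil f : finsums f 0.
Proof. exists nil. split; [constructor | reflexivity]. Qed.

Lemma finsums_le_l2norm f s : is_l2 f -> finsums f s -> s <= l2norm f ^ 2.
Proof.
  intros Hf Hs. assert (L := Rsup_is_lub _ (ex_intro _ 0 (finsums_nil f)) Hf).
  unfold l2norm. rewrite pow2_sqrt; [apply L, Hs|].
  apply Rle_trans with 0; [lra | apply L, finsums_nil].
Qed.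

Lemma l2norm_nonneg f : 0 <= l2norm f.
Proof. apply sqrt_pos. Qed.

Lemma l2norm_least f c : 0 <= c -> (forall s, finsums f s -> s <= c ^ 2) ->
  is_l2 f /\ l2norm f <= c.
Proof.
  intros Hc Hs. split; [exists (c ^ 2); exact Hs|].
  unfold l2norm. rewrite <- (sqrt_pow2 c Hc). apply sqrt_le_1_alt.
  apply Rsup_least; [exists 0; apply finsums_nil | exact Hs].
Qed.

Lemma hnorm_le_l2norm f z : is_l2 f -> hnorm (f z) <= l2norm f.
Proof.
  intros Hf.
  assert (E : hnorm (f z) ^ 2 + 0 <= l2norm f ^ 2).
  { apply finsums_le_l2norm; [exact Hf|]. exists (z :: nil).
    split; [repeat constructor; intros [] | reflexivity]. }
  pose proof (hnorm_nonneg H (f z)). pose proof (l2norm_nonneg f). nra.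
Qed.

(* Reindexing along an injective [s] turns a finite sum for [g] into one for [f]. *)
Lemma l2_dominated (s : RepT Rep -> RepT Rep) f g c :
  Injective s -> 0 <= c -> (forall z, hnorm (g z) <= c * hnorm (f (s z))) -> is_l2 f ->
  is_l2 g /\ l2norm g <= c * l2norm f.
Proof.
  intros Inj Hc Hgf Hf.
  apply l2norm_least; [pose proof (l2norm_nonneg f); nra|].
  intros t [l [Nd ->]].
  assert (Le : sqsum g l <= c ^ 2 * sqsum f (map s l)).
  { clear Nd. induction l as [|a l IH]; simpl; [lra|].
    specialize (Hgf a). pose proof (hnorm_nonneg H (g a)). nra. }
  assert (Lf : sqsum f (map s l) <= l2norm f ^ 2).
  { apply finsums_le_l2norm; [exact Hf|]. exists (map s l). split; [|reflexivity].
    rewrite map_map. apply (Injective_map_NoDup (f := fun x => proj1_sig (s x))).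
    - intros x y E. apply Inj, RepT_eq, E.
    - exact (NoDup_map_inv _ _ Nd). }
  rewrite Rpow_mult_distr. assert (0 <= c ^ 2) by nra. nra.
Qed.

Lemma l2_zero : is_l2 (fun _ : RepT Rep => @hzero H) /\ l2norm (fun _ : RepT Rep => @hzero H) <= 0.
Proof.
  apply l2norm_least; [lra|]. intros t [l [_ ->]].
  induction l as [|a l IH]; simpl; [lra|]. rewrite hnorm_zero. lra.
Qed.

Lemma l2norm_sub_le f g : is_l2 f -> is_l2 g -> l2norm f <= 1 -> l2norm g <= 1 ->
  l2norm (fun z => hsub (f z) (g z)) <= 2.
Proof.
  intros Hf Hg Nf Ng. apply l2norm_least; [lra|]. intros t [l [Nd ->]].
  assert (Le : sqsum (fun z => hsub (f z) (g z)) l <= 2 * sqsum f l + 2 * sqsum g l).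
  { clear Nd. induction l as [|a l IH]; simpl; [lra|].
    pose proof (hnorm_sub_sq H (f a) (g a)). lra. }
  assert (Bf : sqsum f l <= l2norm f ^ 2) by (apply finsums_le_l2norm; [|exists l]; auto).
  assert (Bg : sqsum g l <= l2norm g ^ 2) by (apply finsums_le_l2norm; [|exists l]; auto).
  pose proof (l2norm_nonneg f). pose proof (l2norm_nonneg g). nra.
Qed.

Definition delta (w : RepT Rep) (v : H) : RepT Rep -> H :=
  fun z => if excluded_middle_informative (z = w) then v else hzero.

Lemma delta_at w v : delta w v w = v.
Proof. unfold delta. destruct (excluded_middle_informative (w = w)); congruence. Qed.

Lemma delta_l2 w v : hnorm v <= 1 -> is_l2 (delta w v) /\ l2norm (delta w v) <= 1.
Proof.
  intros Hv. assert (Hv2 : hnorm v ^ 2 <= 1 ^ 2) by (pose proof (hnorm_nonneg H v); nra).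
  apply l2norm_least; [lra|]. intros t [l [Nd ->]]. apply NoDup_map_inv in Nd.
  apply Rle_trans with (hnorm v ^ 2); [|exact Hv2].
  assert (Off : forall m, ~ In w m -> sqsum (delta w v) m = 0).
  { induction m as [|a m IH]; simpl; intro NI; [reflexivity|].
    rewrite IH by tauto. unfold delta.
    destruct (excluded_middle_informative (a = w)); [tauto|]. rewrite hnorm_zero. ring. }
  induction Nd as [|a l NI Nd IH]; [simpl; pose proof (hnorm_nonneg H v); nra|].
  change (sqsum (delta w v) (a :: l)) with (hnorm (delta w v a) ^ 2 + sqsum (delta w v) l).
  destruct (excluded_middle_informative (a = w)) as [->|Ne].
  - rewrite delta_at, Off by exact NI. lra.
  - assert (Z : delta w v a = hzero).
    { unfold delta. destruct excluded_middle_informative; congruence. }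
    rewrite Z, hnorm_zero. nra.
Qed.

End SquareSummable.

Section WeightedShift.
Variable G : Group.
Variable Rep : G -> Prop.
Variable H : Hilbert.

Definition wshift (s : RepT Rep -> RepT Rep) (P : RepT Rep -> H -> H) : L2op Rep H :=
  fun f z => P z (f (s z)).

Lemma opdist_l2_least (X Y : L2op Rep H) D :
  (forall f, is_l2 f -> l2norm f <= 1 -> l2norm (fun z => hsub (X f z) (Y f z)) <= D) ->
  opdist_l2 X Y <= D.
Proof.
  intro HD. apply Rsup_least; [|intros t [f [Hf [Nf ->]]]; auto].
  destruct (l2_zero G Rep H) as [Z NZ]. eexists. exists (fun _ => hzero).
  split; [exact Z | split; [lra | reflexivity]].
Qed.

Lemma opdist_l2_upper (X Y : L2op Rep H) D f :
  (forall f, is_l2 f -> l2norm f <= 1 -> l2norm (fun z => hsub (X f z) (Y f z)) <= D) ->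
  is_l2 f -> l2norm f <= 1 -> l2norm (fun z => hsub (X f z) (Y f z)) <= opdist_l2 X Y.
Proof.
  intros HD Hf Nf. apply Rsup_upper; [|exists f; auto].
  exists D. intros t [g [Hg [Ng ->]]]. auto.
Qed.

Lemma opdist_l2_unitary_bounds (X Y : L2op Rep H) :
  is_unitary_l2 X -> is_unitary_l2 Y -> 0 <= opdist_l2 X Y <= 2.
Proof.
  intros [X1 [_ [X3 _]]] [Y1 [_ [Y3 _]]].
  assert (B : forall f, is_l2 f -> l2norm f <= 1 ->
             l2norm (fun z => hsub (X f z) (Y f z)) <= 2).
  { intros f Hf Nf. apply l2norm_sub_le; auto; [rewrite X3 | rewrite Y3]; auto. }
  split; [|exact (opdist_l2_least X Y 2 B)].
  destruct (l2_zero G Rep H) as [Z NZ].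
  eapply Rle_trans; [apply l2norm_nonneg | apply (opdist_l2_upper X Y 2 _ B Z)]. lra.
Qed.

Section SameShift.
Variable s : RepT Rep -> RepT Rep.
Variables P Q : RepT Rep -> H -> H.
Hypothesis s_inj : Injective s.
Hypothesis P_iso : forall z, is_isometry H (P z).
Hypothesis Q_iso : forall z, is_isometry H (Q z).

Lemma wshift_sub_l2 D f : 0 <= D -> (forall z, opdist (P z) (Q z) <= D) -> is_l2 f ->
  l2norm f <= 1 -> is_l2 (fun z => hsub (wshift s P f z) (wshift s Q f z)) /\
  l2norm (fun z => hsub (wshift s P f z) (wshift s Q f z)) <= D.
Proof.
  intros D0 HD Hf Nf.
  destruct (l2_dominated G Rep H s f (fun z => hsub (wshift s P f z) (wshift s Q f z)) D)
    as [L2 Le]; auto.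
  - intro z. eapply Rle_trans; [apply hnorm_sub_le_opdist; auto|].
    apply Rmult_le_compat_r; [apply hnorm_nonneg | apply HD].
  - split; [exact L2|]. pose proof (l2norm_nonneg G Rep H f). nra.
Qed.

Lemma opdist_l2_wshift_le D : 0 <= D -> (forall z, opdist (P z) (Q z) <= D) ->
  opdist_l2 (wshift s P) (wshift s Q) <= D.
Proof. intros D0 HD. apply opdist_l2_least. intros; apply wshift_sub_l2; auto. Qed.

(* Test against [delta (s z) v], whose image is concentrated at [z]. *)
Lemma opdist_le_opdist_l2_wshift z : opdist (P z) (Q z) <= opdist_l2 (wshift s P) (wshift s Q).
Proof.
  assert (B2 : forall f, is_l2 f -> l2norm f <= 1 ->
             is_l2 (fun z => hsub (wshift s P f z) (wshift s Q f z)) /\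
             l2norm (fun z => hsub (wshift s P f z) (wshift s Q f z)) <= 2).
  { intros. apply wshift_sub_l2; auto; [lra|]. intro; apply opdist_le_2; auto. }
  apply opdist_least. intros v Hv.
  destruct (delta_l2 G Rep H (s z) v Hv) as [Dl Dn].
  eapply Rle_trans; [|apply (opdist_l2_upper _ _ 2 _ (fun f Hf Nf => proj2 (B2 f Hf Nf)) Dl Dn)].
  replace (hsub (P z v) (Q z v))
    with (hsub (wshift s P (delta G Rep H (s z) v) z) (wshift s Q (delta G Rep H (s z) v) z))
    by (unfold wshift; rewrite delta_at; reflexivity).
  exact (hnorm_le_l2norm G Rep H _ z (proj1 (B2 _ Dl Dn))).
Qed.

End SameShift.

Lemma wshift_unitary (s t : RepT Rep -> RepT Rep) (P : RepT Rep -> H -> H) :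
  (forall z, t (s z) = z) -> (forall w, s (t w) = w) -> (forall z, is_unitary (P z)) ->
  is_unitary_l2 (wshift s P).
Proof.
  intros ts st HP.
  assert (s_inj : Injective s) by (intros a b E; rewrite <- (ts a), <- (ts b), E; reflexivity).
  assert (t_inj : Injective t) by (intros a b E; rewrite <- (st a), <- (st b), E; reflexivity).
  assert (Norm : forall z v, hnorm (P z v) = hnorm v) by (intros z; apply (HP z)).
  assert (Fwd : forall f, is_l2 f -> is_l2 (wshift s P f) /\ l2norm (wshift s P f) <= 1 * l2norm f).
  { intros f Hf. apply (l2_dominated G Rep H s); auto; [lra|].
    intro z. unfold wshift. rewrite Norm. lra. }
  split; [|split; [|split]].
  - intros f Hf. apply Fwd, Hf.
  - intros a f g _ _ z. apply (HP z).
  - intros f Hf. apply Rle_antisym; [destruct (Fwd f Hf); lra|].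
    destruct (l2_dominated G Rep H t (wshift s P f) f 1) as [_ Le]; auto; [lra| |apply Fwd, Hf|lra].
    intro w. unfold wshift. rewrite st, Norm. lra.
  - intros g Hg.
    set (f := fun w => epsilon (inhabits hzero) (fun v => P (t w) v = g (t w))).
    assert (Pf : forall w, P (t w) (f w) = g (t w)).
    { intro w. apply (epsilon_spec (inhabits hzero) (fun v => P (t w) v = g (t w))).
      apply (HP (t w)). }
    exists f. split.
    + apply (l2_dominated G Rep H t g f 1); auto; [lra|]. intro w. rewrite <- Pf, Norm. lra.
    + intro z. pose proof (Pf (s z)) as E. rewrite ts in E. exact E.
Qed.

End WeightedShift.

Section GroupFacts.
Variable G : Group.
Implicit Types a b z : G.

Lemma gmul_KV a z : gmul a (gmul (ginv a) z) = z.
Proof. rewrite gmul_assoc, gmul_inv_r, gmul_e_l. reflexivity. Qed.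

Lemma gmul_VK a z : gmul (ginv a) (gmul a z) = z.
Proof. rewrite gmul_assoc, gmul_inv_l, gmul_e_l. reflexivity. Qed.

Lemma ginv_unique a b : gmul a b = ge -> b = ginv a.
Proof. intro E. rewrite <- (gmul_VK a b), E, gmul_e_r. reflexivity. Qed.

Lemma ginv_mul a b : ginv (gmul a b) = gmul (ginv b) (ginv a).
Proof.
  symmetry. apply ginv_unique.
  rewrite <- gmul_assoc, (gmul_assoc _ b), gmul_inv_r, gmul_e_l, gmul_inv_r. reflexivity.
Qed.

Lemma ginv_ginv a : ginv (ginv a) = a.
Proof. symmetry. apply ginv_unique, gmul_inv_l. Qed.

Lemma ginv_e : ginv (@ge G) = ge.
Proof. symmetry. apply ginv_unique, gmul_e_l. Qed.

End GroupFacts.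

Ltac gsimpl := repeat progress (try rewrite ginv_mul; try rewrite ginv_ginv; try rewrite ginv_e;
  try rewrite <- gmul_assoc; try rewrite gmul_KV; try rewrite gmul_VK; try rewrite gmul_inv_l;
  try rewrite gmul_inv_r; try rewrite gmul_e_l; try rewrite gmul_e_r).

Section CosetAction.
Variable G : Group.
Variables Lam Rep : G -> Prop.
Hypothesis Lam_sub : is_subgroup G Lam.
Hypothesis Rep_tr : is_transversal G Lam Rep.
Variable heR : Rep ge.

Let Lam_e : Lam ge := proj1 Lam_sub.
Let Lam_mul : forall x y, Lam x -> Lam y -> Lam (gmul x y) := proj1 (proj2 Lam_sub).
Let Lam_inv : forall x, Lam x -> Lam (ginv x) := proj2 (proj2 Lam_sub).

Lemma Lam_eq x y : x = y -> Lam x -> Lam y.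
Proof. intros ->; auto. Qed.

Lemma retr_coset g : Lam (gmul (proj1_sig (retr Lam Rep heR g)) (ginv g)).
Proof.
  unfold retr. apply (epsilon_spec (inhabits (exist _ ge heR))
    (fun x : RepT Rep => Lam (gmul (proj1_sig x) (ginv g)))).
  destruct (Rep_tr g) as [x [[Rx Lx] _]]. exists (exist _ x Rx). exact Lx.
Qed.

Lemma retr_eq g (z : RepT Rep) : Lam (gmul (proj1_sig z) (ginv g)) -> retr Lam Rep heR g = z.
Proof.
  intro Lz. apply RepT_eq. destruct (Rep_tr g) as [y [_ U]].
  transitivity y; [symmetry|]; apply U; split;
    [apply proj2_sig | apply retr_coset | apply proj2_sig | exact Lz].
Qed.

Definition eR : RepT Rep := exist _ ge heR.

(* [ract g] is the right action of [g] on the cosets, read on their representatives. *)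
Definition ract (g : G) (z : RepT Rep) : RepT Rep := retr Lam Rep heR (gmul (proj1_sig z) g).

Definition rcocycle (z : RepT Rep) (g : G) : G :=
  gmul (gmul (proj1_sig z) g) (ginv (proj1_sig (ract g z))).

Lemma rcocycle_in z g : Lam (rcocycle z g).
Proof.
  refine (Lam_eq _ _ _ (Lam_inv _ (retr_coset (gmul (proj1_sig z) g)))).
  unfold rcocycle, ract. gsimpl. reflexivity.
Qed.

Lemma ract_e z : ract ge z = z.
Proof. apply retr_eq. gsimpl. exact Lam_e. Qed.

Lemma ract_mul x y z : ract y (ract x z) = ract (gmul x y) z.
Proof.
  apply retr_eq.
  refine (Lam_eq _ _ _ (Lam_mul _ _ (retr_coset (gmul (proj1_sig z) (gmul x y)))
    (Lam_inv _ (retr_coset (gmul (proj1_sig z) x))))).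
  unfold ract. gsimpl. reflexivity.
Qed.

Lemma ract_invK g z : ract (ginv g) (ract g z) = z.
Proof. rewrite ract_mul, gmul_inv_r. apply ract_e. Qed.

Lemma ract_Kinv g w : ract g (ract (ginv g) w) = w.
Proof. rewrite ract_mul, gmul_inv_l. apply ract_e. Qed.

Lemma ract_inj g : Injective (ract g).
Proof. intros a b E. rewrite <- (ract_invK g a), <- (ract_invK g b), E. reflexivity. Qed.

Lemma rcocycle_mul z x y : rcocycle z (gmul x y) = gmul (rcocycle z x) (rcocycle (ract x z) y).
Proof. unfold rcocycle at 2 3. rewrite ract_mul. unfold rcocycle. gsimpl. reflexivity. Qed.

Lemma ract_eR a : Lam a -> ract a eR = eR.
Proof. intro La. apply retr_eq. simpl. gsimpl. apply Lam_inv, La. Qed.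

Lemma rcocycle_eR a : Lam a -> rcocycle eR a = a.
Proof. intro La. unfold rcocycle. rewrite ract_eR by exact La. simpl. gsimpl. reflexivity. Qed.

End CosetAction.

Section Induction.
Variable G : Group.
Variables Lam Rep : G -> Prop.
Hypothesis Hsub : is_subgroup G Lam.
Hypothesis Htr : is_transversal G Lam Rep.
Variable heR : Rep ge.
Variable H : Hilbert.

Notation ind := (induce Lam Rep heR).
Notation ract := (ract G Lam Rep heR).
Notation rcocycle := (rcocycle G Lam Rep heR).
Notation eR := (eR G Rep heR).

Lemma induce_wshift (mu : G -> H -> H) g :
  ind mu g = wshift G Rep H (ract g) (fun z => mu (rcocycle z g)).
Proof. reflexivity. Qed.

Lemma induce_comp (mu : G -> H -> H) x y :
  (fun f => ind mu x (ind mu y f)) =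
  wshift G Rep H (ract (gmul x y)) (fun z v => mu (rcocycle z x) (mu (rcocycle (ract x z) y) v)).
Proof.
  extensionality f. extensionality z. unfold wshift.
  rewrite <- (ract_mul G Lam Rep Hsub Htr). reflexivity.
Qed.

Lemma isometry_at_rcocycle (mu : G -> H -> H) z g :
  maps_to_U Lam mu -> is_isometry H (mu (rcocycle z g)).
Proof. intro Hm. apply unitary_isometry, Hm, rcocycle_in; assumption. Qed.

Lemma dist_induce (mu1 mu2 : G -> H -> H) : maps_to_U Lam mu1 -> maps_to_U Lam mu2 ->
  dist_l2 (ind mu1) (ind mu2) = dist_sub Lam mu1 mu2.
Proof.
  intros H1 H2.
  assert (Iso : forall l, Lam l -> is_isometry H (mu1 l) /\ is_isometry H (mu2 l)).
  { intros l Ll. split; apply unitary_isometry; auto. }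
  assert (Bnd : exists B, forall s, (exists l, Lam l /\ s = opdist (mu1 l) (mu2 l)) -> s <= B).
  { exists 2. intros s [l [Ll ->]]. apply opdist_le_2; apply Iso, Ll. }
  assert (Ue : Lam ge) by apply Hsub.
  apply Rsup_eq_of_dominated; [exists (opdist (mu1 ge) (mu2 ge)), ge; auto | exact Bnd
    | exists (opdist_l2 (ind mu1 ge) (ind mu2 ge)), ge; reflexivity | |].
  - intros t [g ->]. rewrite !induce_wshift. apply opdist_l2_wshift_le;
      auto using ract_inj, isometry_at_rcocycle.
    + eapply Rle_trans; [apply (opdist_nonneg H (mu1 ge) (mu2 ge)); apply Iso, Ue|].
      apply Rsup_upper; [exact Bnd | exists ge; auto].
    + intro z. apply Rsup_upper; [exact Bnd|]. exists (rcocycle z g).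
      split; [apply rcocycle_in|]; auto.
  - intros s [l [Ll ->]]. exists (opdist_l2 (ind mu1 l) (ind mu2 l)). split; [exists l; auto|].
    rewrite !induce_wshift.
    pose proof (opdist_le_opdist_l2_wshift G Rep H (ract l) (fun z => mu1 (rcocycle z l))
      (fun z => mu2 (rcocycle z l)) (ract_inj G Lam Rep Hsub Htr heR l)
      (fun z => isometry_at_rcocycle mu1 z l H1) (fun z => isometry_at_rcocycle mu2 z l H2) eR)
      as E.
    cbv beta in E. rewrite (rcocycle_eR G Lam Rep Hsub Htr heR l Ll) in E. exact E.
Qed.

Lemma def_induce (mu : G -> H -> H) : maps_to_U Lam mu -> def_l2 (ind mu) = def_sub Lam mu.
Proof.
  intro Hm.
  assert (Iso : forall l, Lam l -> is_isometry H (mu l)) by (intros; apply unitary_isometry; auto).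
  assert (Bnd : exists B, forall s, (exists x y, Lam x /\ Lam y /\
             s = opdist (mu (gmul x y)) (fun v => mu x (mu y v))) -> s <= B).
  { exists 2. intros s [x [y [Lx [Ly ->]]]].
    apply opdist_le_2; [apply Iso, Hsub | apply isometry_comp]; auto. }
  assert (Ue : Lam ge) by apply Hsub.
  apply Rsup_eq_of_dominated; [exists (opdist (mu (gmul ge ge)) (fun v => mu ge (mu ge v))), ge, ge;
      auto | exact Bnd | eexists; exists ge, ge; reflexivity | |].
  - intros t [x [y ->]]. rewrite induce_comp, induce_wshift.
    apply opdist_l2_wshift_le; auto using ract_inj, isometry_at_rcocycle.
    + intro z. apply isometry_comp; apply isometry_at_rcocycle, Hm.
    + eapply Rle_trans; [apply (opdist_nonneg H (mu (gmul ge ge)) (fun v => mu ge (mu ge v)));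
        [apply Iso, Hsub | apply isometry_comp]; auto|].
      apply Rsup_upper; [exact Bnd | exists ge, ge; auto].
    + intro z. rewrite (rcocycle_mul G Lam Rep Hsub Htr). apply Rsup_upper; [exact Bnd|].
      exists (rcocycle z x), (rcocycle (ract x z) y). split; [|split]; [apply rcocycle_in; assumption .. | reflexivity].
  - intros s [a [b [La [Lb ->]]]]. eexists. split; [exists a, b; reflexivity|].
    rewrite induce_comp, induce_wshift.
    pose proof (opdist_le_opdist_l2_wshift G Rep H (ract (gmul a b))
      (fun z => mu (rcocycle z (gmul a b)))
      (fun z v => mu (rcocycle z a) (mu (rcocycle (ract a z) b) v))
      (ract_inj G Lam Rep Hsub Htr heR _) (fun z => isometry_at_rcocycle mu z _ Hm)
      (fun z => isometry_comp H _ _ (isometry_at_rcocycle mu z a Hm)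
                  (isometry_at_rcocycle mu _ b Hm)) eR) as E.
    cbv beta in E.
    rewrite (ract_eR G Lam Rep Hsub Htr heR a La), !(rcocycle_eR G Lam Rep Hsub Htr heR) in E;
      auto. apply Hsub; auto.
Qed.

Lemma induce_unitary (nu : G -> H -> H) : maps_to_U Lam nu -> forall g, is_unitary_l2 (ind nu g).
Proof.
  intros Hn g. rewrite induce_wshift. apply (wshift_unitary G Rep H (ract g) (ract (ginv g))).
  - apply ract_invK; assumption.
  - apply ract_Kinv; assumption.
  - intro z. apply Hn, rcocycle_in; assumption.
Qed.

Lemma induce_rep (nu : G -> H -> H) : is_unitary_rep_sub Lam nu -> is_unitary_rep_l2 (ind nu).
Proof.
  intros [Hn Hr]. split; [apply induce_unitary, Hn|].
  intros x y f _ z. rewrite induce_wshift. unfold wshift.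
  rewrite (rcocycle_mul G Lam Rep Hsub Htr), <- (ract_mul G Lam Rep Hsub Htr).
  apply Hr; apply rcocycle_in; assumption.
Qed.

Lemma id_rep : is_unitary_rep_sub Lam (fun (_ : G) (v : H) => v).
Proof.
  split; [|reflexivity]. intros l _. split; [|split]; [reflexivity | reflexivity |].
  intro w. exists w. reflexivity.
Qed.

Lemma D_induce_le (mu : G -> H -> H) : maps_to_U Lam mu -> D_l2 (ind mu) <= D_sub Lam mu.
Proof.
  intro Hm. apply Rinf_le_of_subset.
  - exists (dist_sub Lam mu (fun _ v => v)), (fun _ v => v). split; [apply id_rep | reflexivity].
  - exists 0. intros t [nu [[Un _] ->]].
    pose proof (opdist_l2_unitary_bounds G Rep H _ _ (induce_unitary mu Hm ge) (Un ge)) as B0.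
    eapply Rle_trans; [apply B0|]. apply Rsup_upper; [|exists ge; reflexivity].
    exists 2. intros s [g ->]. apply opdist_l2_unitary_bounds; [apply induce_unitary, Hm | apply Un].
  - intros d [nu [Hnu ->]]. exists (ind nu). split; [apply induce_rep, Hnu|].
    symmetry. apply dist_induce; [exact Hm | apply Hnu].
Qed.

End Induction.

Theorem lemma1p4 (G : Group) (Lam : G -> Prop) (Rep : G -> Prop)
  (Hsub : is_subgroup G Lam) (Htr : is_transversal G Lam Rep) (heR : Rep ge)
  (H : Hilbert) (mu mu1 mu2 : G -> H -> H)
  (Hmu : maps_to_U Lam mu) (Hmu1 : maps_to_U Lam mu1) (Hmu2 : maps_to_U Lam mu2) :
  def_l2 (induce Lam Rep heR mu) = def_sub Lam mu /\
  dist_l2 (induce Lam Rep heR mu1) (induce Lam Rep heR mu2) = dist_sub Lam mu1 mu2 /\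
  D_l2 (induce Lam Rep heR mu) <= D_sub Lam mu.
Proof.
  split; [|split].
  - apply def_induce; assumption.
  - apply dist_induce; assumption.
  - apply D_induce_le; assumption.
Qed.
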